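(* For every $n\equiv 1$ or $3 \pmod 4$ with $n\ge 7$, there exists a Heffter array $H(n;6)$ (indeed one in which every row and column sums, as integers, to $12n+1$).
   Context: A Heffter array $H(n;k)$ is an $n\times n$ array in which some cells are filled with nonzero integers and the others are empty, such that: each row and each column contains exactly $k$ filled cells; the entries of every row and of every column sum to $0$ modulo $2nk+1$; and for each integer $1\le x\le nk$, exactly one of $x$ or $-x$ appears in the array, and it appears exactly once. *)

From HB Require Import structures.
From mathcomp Require Import all_boot all_order all_algebra.
Set Implicit Arguments. Unset Strict Implicit. Unset Printing Implicit Defensive.
Import Order.TTheory GRing.Theory Num.Theory.

(* An n x n partially filled array: None = empty cell, Some z = cell filled with z. *)
Definition parray (n : nat) := 'I_n -> 'I_n -> option int.

Definition cval (c : option int) : int := odflt 0%R c.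

Definition filled (c : option int) : bool := if c is Some _ then true else false.

Definition row_sum n (A : parray n) (i : 'I_n) : int := (\sum_(j < n) cval (A i j))%R.
Definition col_sum n (A : parray n) (j : 'I_n) : int := (\sum_(i < n) cval (A i j))%R.

Definition heffter (n k : nat) (A : parray n) : Prop :=
  (forall i j z, A i j = Some z -> z != 0%R) /\
  (forall i : 'I_n, #|[set j : 'I_n | filled (A i j)]| = k) /\
  (forall j : 'I_n, #|[set i : 'I_n | filled (A i j)]| = k) /\
  (forall i : 'I_n, (row_sum A i %% Posz (2 * n * k + 1))%Z = 0%R) /\
  (forall j : 'I_n, (col_sum A j %% Posz (2 * n * k + 1))%Z = 0%R) /\
  (forall x : nat, 1 <= x <= n * k ->
     #|[set p : 'I_n * 'I_n |
        (A p.1 p.2 == Some (Posz x)) || (A p.1 p.2 == Some (- Posz x)%R)]| = 1).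

(* The array is filled cyclically along the six wrapped diagonals
   d = 0, 1, 2, 3, 4, 6 (j - i = d mod n).  Row i of diagonal d holds a number of
   magnitude  block d * n + offset d i + 1,  where the blocks 1, 5, 3, 2, 0, 4 are
   distinct and each offset (i, n - 1 - i, i + 1 or i + 3 mod n) is a permutation of
   'I_n; hence the magnitudes 1, ..., 6n each occur exactly once.  Diagonals 3 and 4
   are negative.  Along a row the offsets cancel in pairs leaving 12n + 1, and the
   shifts by 1 and 3 are chosen so that they also cancel in pairs along a column. *)

From HB Require Import structures.
From mathcomp Require Import all_boot all_order all_algebra.
From mathcomp Require Import zify ring.

Set Implicit Arguments.
Unset Strict Implicit.
Unset Printing Implicit Defensive.

Import GRing.Theory.

Lemma big_ord_cut (R : Type) (idx : R) (op : Monoid.com_law idx) k n (F : nat -> R) :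
  k <= n -> (forall t, k <= t -> F t = idx) ->
  \big[op/idx]_(t < n) F t = \big[op/idx]_(t < k) F t.
Proof.
move=> le_kn F_idx; rewrite (big_ord_widen _ _ le_kn) [RHS]big_mkcond.
by apply: eq_bigr => t _; case: ltnP => // /F_idx.
Qed.

Section DiagonalArray.

Local Open Scope ring_scope.

Variables (m : nat) (f : 'I_m.+1 -> 'I_m.+1 -> option int).

Definition diagonal_array : parray m.+1 := fun i j => f (j - i) i.

Lemma diagonal_arrayE i d : diagonal_array i (d + i) = f d i.
Proof. by rewrite /diagonal_array addrK. Qed.

Lemma row_sum_diagonal_array i : row_sum diagonal_array i = \sum_d cval (f d i).
Proof.
rewrite /row_sum (reindex_inj (addIr i)).
by apply: eq_bigr => d _; rewrite diagonal_arrayE.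
Qed.

Lemma col_sum_diagonal_array j : col_sum diagonal_array j = \sum_d cval (f d (j - d)).
Proof.
rewrite /col_sum (reindex_inj (can_inj (subKr j))).
by apply: eq_bigr => d _; rewrite /diagonal_array subKr.
Qed.

Lemma card_row_diagonal_array (P : pred (option int)) i :
  #|[set j | P (diagonal_array i j)]| = #|[set d | P (f d i)]|.
Proof.
rewrite -(card_preimset _ (addIr i)); apply: eq_card => j.
by rewrite !inE diagonal_arrayE.
Qed.

Lemma card_col_diagonal_array (P : pred (option int)) j :
  #|[set i | P (diagonal_array i j)]| = #|[set d | P (f d (j - d))]|.
Proof.
rewrite -(card_preimset _ (can_inj (subKr j))); apply: eq_card => i.
by rewrite !inE /diagonal_array subKr.
Qed.

Lemma card_cells_diagonal_array (P : pred (option int)) :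
  #|[set p : 'I_m.+1 * 'I_m.+1 | P (diagonal_array p.1 p.2)]| =
  #|[set q : 'I_m.+1 * 'I_m.+1 | P (f q.1 q.2)]|.
Proof.
pose g (q : 'I_m.+1 * 'I_m.+1) := (q.2, q.1 + q.2).
have gK : cancel g (fun p => (p.2 - p.1, p.1)) by move=> [d i]; rewrite /= addrK.
rewrite -(card_preimset _ (can_inj gK)); apply: eq_card => -[d i].
by rewrite !inE diagonal_arrayE.
Qed.

End DiagonalArray.

Section Construction.

(* Writing the order as m.+2 gives 'I_n its ring structure. *)
Variable m : nat.
Hypothesis m_ge5 : 5 <= m.
Local Notation n := m.+2.

Definition on_diagonal (t : nat) : bool := (t < 7) && (t != 5).

Definition negative (t : nat) : bool := (t == 3) || (t == 4).

Definition block (t : nat) : nat :=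
  match t with 0 => 1 | 1 => 5 | 2 => 3 | 3 => 2 | 4 => 0 | _ => 4 end.

Definition diagonal_of_block (q : nat) : nat :=
  match q with 0 => 4 | 1 => 0 | 2 => 3 | 3 => 2 | 4 => 6 | _ => 1 end.

Definition offset (t : nat) (i : 'I_n) : 'I_n :=
  match t with 0 => i | 1 => rev_ord i | 2 | 4 => (i + 1)%R | _ => (i + 3)%R end.

Definition magnitude (t : nat) (i : 'I_n) : nat := block t * n + offset t i + 1.

Definition entry (t : nat) (i : 'I_n) : option int :=
  if on_diagonal t then
    Some (if negative t then - Posz (magnitude t i) else Posz (magnitude t i))%R
  else None.

Definition heffter_array : parray n := diagonal_array (fun d i => entry d i).

Lemma entry_out t i : 7 <= t -> entry t i = None.
Proof. by rewrite /entry /on_diagonal leqNgt => /negbTE ->. Qed.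

Lemma filled_entry t i : filled (entry t i) = on_diagonal t.
Proof. by rewrite /entry; case: on_diagonal. Qed.

Lemma entry_neq0 t i z : entry t i = Some z -> z != 0%R.
Proof.
by rewrite /entry /magnitude addn1; case: on_diagonal => // -[<-]; case: negative.
Qed.

Lemma entry_eq_pm t i x : 0 < x ->
  (entry t i == Some (Posz x)) || (entry t i == Some (- Posz x)%R) =
  on_diagonal t && (magnitude t i == x).
Proof.
rewrite /entry /magnitude => x_gt0; case: on_diagonal => //=.
by case: negative; rewrite !(inj_eq Some_inj); apply/idP/idP; lia.
Qed.

Lemma card_on_diagonal : #|[set d : 'I_n | on_diagonal d]| = 6.
Proof.
rewrite -sum1_card big_mkcond /=; under eq_bigr do rewrite inE.
rewrite (@big_ord_cut _ _ _ 7 n (fun t => if on_diagonal t then 1 else 0)) //.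
  by rewrite !big_ord_recr big_ord0.
by move=> t; rewrite /on_diagonal leqNgt => /negbTE ->.
Qed.

Lemma row_sum_heffter_array i : row_sum heffter_array i = Posz (12 * n + 1).
Proof.
rewrite row_sum_diagonal_array.
rewrite (@big_ord_cut _ _ _ 7 n (fun t => cval (entry t i))) //; last first.
  by move=> t /entry_out ->.
rewrite !big_ord_recr big_ord0 /= /magnitude /=.
have := ltn_ord i; lia.
Qed.

Lemma col_sum_heffter_array j : col_sum heffter_array j = Posz (12 * n + 1).
Proof.
rewrite col_sum_diagonal_array.
under eq_bigr => d _ do rewrite -{2}(natr_Zp d).
rewrite (@big_ord_cut _ _ _ 7 n (fun t => cval (entry t (j - t%:R)%R))) //; last first.
  by move=> t /entry_out ->.
rewrite !big_ord_recr big_ord0 /= /magnitude.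
have -> : offset 0 (j - 0)%R = j by rewrite subr0.
have -> : offset 1 (j - 1)%R = rev_ord (j - 1)%R by [].
have -> : offset 2 (j - 2)%R = (j - 1)%R by change (j - 2 + 1 = j - 1)%R; ring.
have -> : offset 3 (j - 3)%R = j by change (j - 3 + 3 = j)%R; ring.
have -> : offset 4 (j - 4)%R = (j - 3)%R by change (j - 4 + 1 = j - 3)%R; ring.
have -> : offset 6 (j - 6)%R = (j - 3)%R by change (j - 6 + 3 = j - 3)%R; ring.
move: (j - 1)%R (j - 3)%R => a b /=.
have := ltn_ord a; lia.
Qed.

Lemma blockK t : on_diagonal t -> diagonal_of_block (block t) = t.
Proof. by do 7?[case: t => [|t] //]. Qed.

Lemma diagonal_of_blockK q : q < 6 -> block (diagonal_of_block q) = q.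
Proof. by do 6?[case: q => [|q] //]. Qed.

Lemma on_diagonal_of_block q : q < 6 -> on_diagonal (diagonal_of_block q).
Proof. by do 6?[case: q => [|q] //]. Qed.

Lemma offset_inj t : injective (offset t).
Proof.
by case: t => [|[|[|[|[|t]]]]]; [apply: inj_id | apply: rev_ord_inj | apply: addIr ..].
Qed.

Lemma magnitude_inj t t' i i' : on_diagonal t -> on_diagonal t' ->
  magnitude t i = magnitude t' i' -> t = t' /\ i = i'.
Proof.
move=> dt dt'; rewrite /magnitude => /addIn eq_m.
have eq_b : block t = block t'.
  by move: (congr1 (divn^~ n) eq_m); rewrite !divnMDl // !divn_small ?addn0.
have eq_t : t = t' by rewrite -(blockK dt) eq_b blockK.
subst t'; split => //; apply: offset_inj; apply: val_inj; exact: addnI eq_m.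
Qed.

Lemma magnitude_onto x : 0 < x <= n * 6 ->
  exists t i, on_diagonal t /\ magnitude t i = x.
Proof.
move=> /andP[x_gt0 x_le]; set y := x.-1.
have q_lt6 : y %/ n < 6 by rewrite ltn_divLR //; lia.
have [g _ gK] := injF_bij (@offset_inj (diagonal_of_block (y %/ n))).
exists (diagonal_of_block (y %/ n)), (g (Ordinal (ltn_pmod y (ltn0Sn _)))).
split; first exact: on_diagonal_of_block.
rewrite /magnitude gK diagonal_of_blockK //=; have := divn_eq y n; lia.
Qed.

Lemma card_entry_eq_pm x : 0 < x <= n * 6 ->
  #|[set q : 'I_n * 'I_n |
     (entry q.1 q.2 == Some (Posz x)) || (entry q.1 q.2 == Some (- Posz x)%R)]| = 1.
Proof.
move=> /[dup] /andP[x_gt0 _] /magnitude_onto [t [i [dt mti]]].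
have t_lt : t < n by move: dt => /andP[]; lia.
apply/eqP/cards1P; exists (Ordinal t_lt, i); apply/setP => -[d k].
rewrite !inE /= entry_eq_pm //.
apply/andP/eqP => [[dd /eqP]|[-> ->]]; last by rewrite mti.
rewrite -mti => /(magnitude_inj dd dt) [eq_dt ->]; congr pair; exact: val_inj.
Qed.

Lemma heffter_heffter_array : heffter 6 heffter_array.
Proof.
have sum_mod z : z = Posz (12 * n + 1) -> (z %% Posz (2 * n * 6 + 1))%Z = 0%R.
  by move=> ->; rewrite mulnAC modzz.
split; first by move=> i j z; apply: entry_neq0.
split.
  by move=> i; rewrite card_row_diagonal_array -card_on_diagonal;
    apply: eq_card => d; rewrite !inE filled_entry.
split.
  by move=> j; rewrite card_col_diagonal_array -card_on_diagonal;
    apply: eq_card => d; rewrite !inE filled_entry.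
split; first by move=> i; rewrite sum_mod ?row_sum_heffter_array.
split; first by move=> j; rewrite sum_mod ?col_sum_heffter_array.
move=> x x_range.
rewrite (card_cells_diagonal_array _
  (fun c => (c == Some (Posz x)) || (c == Some (- Posz x)%R))).
exact: card_entry_eq_pm.
Qed.

End Construction.

Theorem lemma3p1 (n : nat) :
  (n %% 4 = 1 \/ n %% 4 = 3) -> 7 <= n ->
  exists A : parray n,
    heffter 6 A /\
    (forall i : 'I_n, row_sum A i = Posz (12 * n + 1)) /\
    (forall j : 'I_n, col_sum A j = Posz (12 * n + 1)).
Proof.
move=> _ n_ge7; have [m m_ge5 ->] : exists2 m, 5 <= m & n = m.+2 by exists (n - 2); lia.
exists (@heffter_array m); split; first exact: heffter_heffter_array.
by split; [apply: row_sum_heffter_array | apply: col_sum_heffter_array].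
Qed.
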